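(* For every $\delta>0$ there exist $n\ge1$, a pool $\mathcal D=\{(p_i,t_i)\}_{i=1}^n$ with $p_i\in[0,1]$, $t_i>0$, and a budget $T>0$, such that the greedy backward selection strategy based on individual accuracies (defined in the context) outputs an ensemble $S$ with majority-voting accuracy $q(S)\le 1/2+\delta$, while there is an index set $\mathcal L\subseteq\{1,\dots,n\}$ with $\sum_{i\in\mathcal L}t_i\le T$ and $q(\mathcal L)\ge 1-\delta$. In other words, the difference between the optimal constrained ensemble accuracy and the accuracy produced by this strategy can be arbitrarily close to $1/2$.
   Context: A pool consists of candidate members $i=1,\dots,n$, each with accuracy $p_i\in[0,1]$ and cost $t_i>0$; a budget $T>0$ is given. For a nonempty index set $\mathcal L$ with $|\mathcal L|=\ell$, the (majority voting) accuracy is $q(\mathcal L)=\sum_{k=\lfloor \ell/2\rfloor+1}^{\ell}\sum_{\mathcal I\subseteq\mathcal L,|\mathcal I|=k}\prod_{i\in\mathcal I}p_i\prod_{j\in\mathcal L\setminus\mathcal I}(1-p_j)$. An index set $\mathcal L$ is feasible if $\sum_{i\in\mathcal L}t_i\le T$. Greedy backward selection by accuracy: start with $S=\{1,\dots,n\}$; while $\sum_{i\in S}t_i>T$ and $|S|>1$, remove from $S$ a member with smallest accuracy $p_i$; afterwards, while $|S|>1$ and removing a member of smallest accuracy strictly increases $q(S)$, remove it; output $S$. *)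

From HB Require Import structures.
From mathcomp Require Import all_boot all_order all_algebra.
From mathcomp Require Export reals.
Set Implicit Arguments. Unset Strict Implicit. Unset Printing Implicit Defensive.
Import Order.TTheory GRing.Theory Num.Theory.
Local Open Scope ring_scope.

Section Greedy.
Variables (R : numDomainType) (n : nat) (p t : 'I_n -> R) (T : R).

Definition q (L : {set 'I_n}) : R :=
  \sum_(I in powerset L | (#|L|./2 < #|I|)%N)
     ((\prod_(i in I) p i) * \prod_(j in L :\: I) (1 - p j)).

Definition cost (L : {set 'I_n}) : R := \sum_(i in L) t i.

Definition min_acc (S : {set 'I_n}) (i : 'I_n) : bool :=
  (i \in S) && [forall j in S, p i <= p j].

(* phase 1: while cost S > T and |S| > 1, remove a member of smallest accuracy
   (ties broken arbitrarily: all runs are modelled) *)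
Inductive phase1 : {set 'I_n} -> {set 'I_n} -> Prop :=
| phase1_stop (S : {set 'I_n}) : ~ (T < cost S /\ (1 < #|S|)%N) -> phase1 S S
| phase1_step (S : {set 'I_n}) (i : 'I_n) (S' : {set 'I_n}) : T < cost S -> (1 < #|S|)%N -> min_acc S i ->
    phase1 (S :\ i) S' -> phase1 S S'.

Inductive phase2 : {set 'I_n} -> {set 'I_n} -> Prop :=
| phase2_stop_size (S : {set 'I_n}) : (#|S| <= 1)%N -> phase2 S S
| phase2_stop (S : {set 'I_n}) (i : 'I_n) : (1 < #|S|)%N -> min_acc S i -> q (S :\ i) <= q S ->
    phase2 S S
| phase2_step (S : {set 'I_n}) (i : 'I_n) (S' : {set 'I_n}) : (1 < #|S|)%N -> min_acc S i -> q S < q (S :\ i) ->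
    phase2 (S :\ i) S' -> phase2 S S'.

Definition greedy_output (S : {set 'I_n}) : Prop :=
  exists S1, phase1 [set: 'I_n] S1 /\ phase2 S1 S.

End Greedy.

From HB Require Import structures.
From mathcomp Require Import all_boot all_order all_algebra.
From mathcomp Require Import reals.
From mathcomp Require Import ring lra zify.
Set Implicit Arguments. Unset Strict Implicit.
Import Order.TTheory GRing.Theory Num.Theory.
Local Open Scope ring_scope.

(* The pool consists of one expensive member of accuracy 1/2 + d whose cost 2m
   exhausts the budget, and 2m cheap members of accuracy 1/2 + d/2 and cost 1.
   Greedy selection by accuracy discards cheap members while the budget is
   exceeded and never the expensive one, so it ends with the expensive member
   alone, of accuracy 1/2 + d.  The 2m cheap members fit the budget as well,
   and every minority outcome among them has probability at most
   (c (1 - c))^m with c = 1/2 + d/2, so their majority vote errs with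
   probability at most 4^m (c (1 - c))^m = (1 - d^2)^m, which is below d as
   soon as m d^3 > 1 by Bernoulli's inequality. *)

Lemma prodrD_powerset (R : comPzSemiRingType) (T : finType) (L : {set T})
    (F G : T -> R) :
  \prod_(i in L) (F i + G i) =
  \sum_(I in powerset L) (\prod_(i in I) F i * \prod_(i in L :\: I) G i).
Proof.
pose F' i := if i \in L then F i else 0.
pose G' i := if i \in L then G i else 1.
have -> : \prod_(i in L) (F i + G i) = \prod_i (F' i + G' i).
  by rewrite big_mkcond; apply: eq_bigr => i _; rewrite /F' /G'; case: ifP; rewrite ?add0r.
rewrite bigA_distr (bigID (fun I : {set T} => I \subset L)) /=.
rewrite [X in _ + X]big1 ?addr0 => [|J /subsetPn[i iJ iNL]]; last first.
  by rewrite (bigD1 i) //= iJ /F' (negbTE iNL) mul0r.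
apply: eq_big => [J|J]; first by rewrite inE.
move=> JL; rewrite (bigID (mem J)) /=; congr (_ * _).
  by apply: eq_bigr => i iJ; rewrite iJ /F' (subsetP JL).
rewrite big_mkcond [RHS]big_mkcond; apply: eq_bigr => i _.
by rewrite in_setD /G'; case: (i \in J); case: (i \in L).
Qed.

Lemma bernoulli_ineq (R : realFieldType) (x : R) (m : nat) :
  0 <= x <= 1 -> (1 - x) ^+ m * (1 + m%:R * x) <= 1.
Proof.
case/andP=> x_ge0 x_le1; elim: m => [|m IHm]; first by rewrite expr0 mul0r addr0 mul1r.
have y_ge0 : 0 <= (1 - x) ^+ m by rewrite exprn_ge0 // subr_ge0.
have : 0 <= (1 - x) ^+ m * (m.+1%:R * (x * x)) by rewrite !mulr_ge0.
have -> : (1 - x) ^+ m.+1 * (1 + m.+1%:R * x) =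
    (1 - x) ^+ m * (1 + m%:R * x) - (1 - x) ^+ m * (m.+1%:R * (x * x)).
  by rewrite exprSr -natr1; ring.
lra.
Qed.

Section MajorityAccuracy.
Variables (R : realFieldType) (n : nat) (p : 'I_n -> R).

(* the probability that, among the voters L, exactly those in I are right *)
Definition weight (L I : {set 'I_n}) : R :=
  \prod_(i in I) p i * \prod_(j in L :\: I) (1 - p j).

Lemma sum_weight L : \sum_(I in powerset L) weight L I = 1.
Proof. by rewrite -prodrD_powerset big1 // => i _; rewrite addrC subrK. Qed.

Lemma q_set1 x : q p [set x] = p x.
Proof.
rewrite /q (bigD1 [set x]) /=; last by rewrite powersetE subxx cards1.
rewrite [X in _ + X]big1 ?addr0 => [|I /andP[/andP[]]]; last first.
  by rewrite powersetE subset1 => /orP[->//|/eqP ->]; rewrite cards0 cards1.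
by rewrite big_set1 setDv big_set0 mulr1.
Qed.

Lemma weight_minority_le (L I : {set 'I_n}) (c : R) (m : nat) :
    {in L, forall i, p i = c} -> #|L| = (2 * m)%N -> 1/2 <= c <= 1 ->
    I \subset L -> (#|I| <= m)%N ->
  weight L I <= (c * (1 - c)) ^+ m.
Proof.
move=> p_L card_L /andP[c_ge c_le1] IL I_le.
have c_ge0 : 0 <= c by lra.
have c'_ge0 : 0 <= 1 - c by lra.
have -> : weight L I = c ^+ #|I| * ((1 - c) ^+ (m - #|I|) * (1 - c) ^+ m).
  have card_LI : #|L :\: I| = (m - #|I| + m)%N by rewrite cardsD (setIidPr IL); lia.
  rewrite /weight -exprD -card_LI -!prodr_const; congr (_ * _); apply: eq_bigr => i.
    by move=> /(subsetP IL)/p_L.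
  by move=> /setDP[/p_L ->].
rewrite mulrA exprMn -{3}(subnKC I_le) exprD.
apply: ler_wpM2r; first exact: exprn_ge0.
apply: ler_wpM2l; first exact: exprn_ge0.
by apply: lerXn2r; rewrite ?nnegrE //; lra.
Qed.

Lemma q_majority_ge (L : {set 'I_n}) (c : R) (m : nat) :
    {in L, forall i, p i = c} -> #|L| = (2 * m)%N -> 1/2 <= c <= 1 ->
  1 - (4 * c * (1 - c)) ^+ m <= q p L.
Proof.
move=> p_L card_L c_bounds.
have := sum_weight L; rewrite (bigID (fun I : {set 'I_n} => (#|L|./2 < #|I|)%N)) /=.
rewrite -/(q p L) => sum1.
suff : \sum_(I in powerset L | ~~ (#|L|./2 < #|I|)%N) weight L I <= (4 * c * (1 - c)) ^+ m.
  lra.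
have K_ge0 : 0 <= (c * (1 - c)) ^+ m by rewrite exprn_ge0 //; nra.
apply: (@le_trans _ _ (\sum_(I in powerset L) (c * (1 - c)) ^+ m)).
  rewrite big_mkcondr; apply: ler_sum => I; rewrite powersetE => IL.
  case: ifP => [|_]; last exact: K_ge0.
  rewrite card_L mul2n doubleK -leqNgt.
  exact: weight_minority_le.
have -> : 4 * c * (1 - c) = 2%:R ^+ 2 * (c * (1 - c)) by ring.
by rewrite sumr_const card_powerset card_L [leRHS]exprMn -exprM -natrX mulr_natl.
Qed.

End MajorityAccuracy.

Lemma phase2_small (R : numDomainType) n (p : 'I_n -> R) (S S' : {set 'I_n}) :
  (#|S| <= 1)%N -> phase2 p S S' -> S' = S.
Proof.
move=> S_le1 phase2_S; elim: phase2_S S_le1 => // S0 i S1 S0_gt1 _ _ _ _.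
by rewrite leqNgt S0_gt1.
Qed.

Lemma card_le1_set1 (T : finType) (S : {set T}) x :
  x \in S -> (#|S| <= 1)%N -> S = [set x].
Proof. by move=> xS S_le1; apply/eqP; rewrite eq_sym eqEcard sub1set xS cards1. Qed.

Section DominantMember.
Variables (R : realDomainType) (n : nat) (p t : 'I_n -> R) (T : R) (s : 'I_n).
Hypotheses (p_lt_s : forall j, j != s -> p j < p s) (t_gt0 : forall j, 0 < t j).
Hypothesis t_s : t s = T.

Lemma other_member (S : {set 'I_n}) : (1 < #|S|)%N -> exists2 j, j \in S & j != s.
Proof.
case/card_gt1P=> x [y [xS yS x_neq_y]].
by case: (eqVneq x s) => [x_s|]; [exists y; rewrite // -x_s eq_sym | exists x].
Qed.

Lemma min_acc_neq (S : {set 'I_n}) i : (1 < #|S|)%N -> min_acc p S i -> i != s.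
Proof.
move=> /other_member[j jS j_neq_s] /andP[_ /forallP min_i].
apply/eqP => i_s; move: (min_i j); rewrite jS i_s /=.
by rewrite leNgt p_lt_s.
Qed.

Lemma cost_gt (S : {set 'I_n}) : s \in S -> (1 < #|S|)%N -> T < cost t S.
Proof.
move=> sS /other_member[j jS j_neq_s].
rewrite /cost (bigD1 s) //= (bigD1 j) /=; last by rewrite jS.
rewrite t_s ltrDl ltr_wpDr //; apply: sumr_ge0 => i _; exact: ltW.
Qed.

Lemma phase1_dominant (S S' : {set 'I_n}) :
  s \in S -> phase1 p t T S S' -> S' = [set s].
Proof.
move=> sS phase1_S; elim: phase1_S sS => {S S'} [S stop|S i S' _ S_gt1 min_i _ IH] sS.
  apply: card_le1_set1 => //; rewrite leqNgt; apply/negP => S_gt1.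
  by apply: stop; split; first exact: cost_gt.
by apply: IH; rewrite in_setD1 sS andbT eq_sym (min_acc_neq S_gt1 min_i).
Qed.

Lemma phase1_dominant_exists (S : {set 'I_n}) : s \in S -> phase1 p t T S [set s].
Proof.
elim: {S}_.+1 {-2}S (ltnSn #|S|) => // k IHk S S_le sS.
have [S_le1|S_gt1] := leqP #|S| 1.
  rewrite {1}(card_le1_set1 sS S_le1); apply: phase1_stop => -[].
  by rewrite /cost big_set1 t_s ltxx.
case: (@arg_minP _ _ _ s (fun j => j \in S) p sS) => i iS min_i.
have min_acc_i : min_acc p S i by apply/andP; split => //; apply/forall_inP.
have i_neq_s := min_acc_neq S_gt1 min_acc_i.
apply: phase1_step (cost_gt sS S_gt1) S_gt1 min_acc_i _.
apply: IHk; last by rewrite in_setD1 sS andbT eq_sym.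
by rewrite (cardsD1 i S) iS in S_le.
Qed.

Lemma greedy_output_dominant (S : {set 'I_n}) : greedy_output p t T S <-> S = [set s].
Proof.
split=> [[S1 [phase1_S1 phase2_S1]]|->].
  rewrite (phase1_dominant (in_setT s) phase1_S1) in phase2_S1.
  by rewrite (phase2_small _ phase2_S1) // cards1.
exists [set s]; split; first exact: phase1_dominant_exists (in_setT s).
by apply: phase2_stop_size; rewrite cards1.
Qed.

End DominantMember.

Definition gap_acc (R : realFieldType) (m : nat) (d : R) (i : 'I_(2 * m).+1) : R :=
  if i == ord_max then 1/2 + d else 1/2 + d/2.
Arguments gap_acc {R} m d i.

Definition gap_cost (R : realFieldType) (m : nat) (i : 'I_(2 * m).+1) : R :=
  if i == ord_max then (2 * m)%:R else 1.
Arguments gap_cost : clear implicits.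

Lemma q_cheap_ge (R : realFieldType) (m : nat) (d : R) :
  0 < d <= 1/2 -> 1 < m%:R * d ^+ 3 -> 1 - d <= q (gap_acc m d) [set~ ord_max].
Proof.
move=> /andP[d_gt0 d_le] m_large.
have acc_cheap : {in [set~ ord_max], forall i, gap_acc m d i = 1/2 + d/2}.
  by move=> i; rewrite in_setC1 /gap_acc => /negbTE ->.
have card_cheap : #|[set~ @ord_max (2 * m)]| = (2 * m)%N by rewrite cardsC1 card_ord.
have c_bounds : 1/2 <= 1/2 + d/2 <= 1 by apply/andP; split; lra.
have := q_majority_ge acc_cheap card_cheap c_bounds.
have -> : 4 * (1/2 + d/2) * (1 - (1/2 + d/2)) = 1 - d ^+ 2 by field.
have d2_bounds : 0 <= d ^+ 2 <= 1 by apply/andP; split; nra.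
have := bernoulli_ineq m d2_bounds.
have : 0 <= (1 - d ^+ 2) ^+ m by rewrite exprn_ge0 //; nra.
set y := (1 - d ^+ 2) ^+ m.
nra.
Qed.

Theorem proposition2 (R : realType) (delta : R) : 0 < delta ->
  exists (n : nat) (p t : 'I_n -> R) (T : R),
    [/\ (0 < n)%N,
        (forall i, 0 <= p i <= 1),
        (forall i, 0 < t i)
        & 0 < T] /\
    (exists S, greedy_output p t T S) /\
    (forall S, greedy_output p t T S -> q p S <= 1 / 2 + delta) /\
    (exists L : {set 'I_n}, [/\ L != set0, cost t L <= T & 1 - delta <= q p L]).
Proof.
move=> delta_gt0.
pose d := Num.min delta (1/2).
have d_gt0 : 0 < d by rewrite lt_min delta_gt0; lra.
have d_le : d <= delta /\ d <= 1/2 by rewrite !ge_min !lexx orbT.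
pose m := (Num.truncn (d ^+ 3)^-1).+1.
have m_large : 1 < m%:R * d ^+ 3.
  by rewrite -ltr_pdivrMr ?exprn_gt0 // mul1r real_truncnS_gt ?num_real.
have acc_lt j : j != ord_max -> gap_acc m d j < gap_acc m d ord_max.
  by rewrite /gap_acc eqxx => /negbTE ->; lra.
have cost_gt0 j : 0 < gap_cost R m j.
  by rewrite /gap_cost; case: ifP => _; rewrite ?ltr01 // ltr0n muln_gt0.
have cost_max : gap_cost R m ord_max = (2 * m)%:R by rewrite /gap_cost eqxx.
have greedyE := greedy_output_dominant acc_lt cost_gt0 cost_max.
exists (2 * m).+1, (gap_acc m d), (gap_cost R m), (2 * m)%:R.
split; [split=> //|split; [|split]].
- by move=> i; rewrite /gap_acc; case: ifP; lra.
- by exists [set ord_max]; apply/greedyE.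
- by move=> S /greedyE ->; rewrite q_set1 /gap_acc eqxx; lra.
exists [set~ ord_max]; split.
- by rewrite -card_gt0 cardsC1 card_ord.
- rewrite /cost (eq_bigr (fun=> 1)) => [|i]; last by rewrite in_setC1 /gap_cost => /negbTE ->.
  by rewrite sumr_const cardsC1 card_ord.
apply: le_trans (q_cheap_ge _ m_large); first by lra.
by apply/andP; split; lra.
Qed.
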